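(* Let $p$ be a prime, $r\geq 1$ and $d\geq 0$. Then $$\prod_{\lambda\in\mathrm{Par}(d)}\vartheta_{p^r}(\lambda)=p^{\,r\,l(d)},$$ i.e. $\sum_{\lambda\in\mathrm{Par}(d)}\log_p\vartheta_{p^r}(\lambda)=r\,l(d)$. (Equivalently, the product equals $\det X_{p^r,d}$.)
   Context: $\mathrm{Par}(d)$ is the set of partitions of $d$; for a partition $\lambda$, $m_n(\lambda)$ is the multiplicity of $n$ as a part and $l(\lambda)$ the number of parts; $l(d)=\sum_{\lambda\in\mathrm{Par}(d)}l(\lambda)$ is the total length function. $\nu_p$ is the $p$-adic valuation. For an integer $a\geq 0$ let $d_p(a)=\sum_{j\geq1}\lfloor a/p^j\rfloor$ (so $p^{d_p(a)}$ is the $p$-part of $a!$). Define $$\vartheta_{p^r}(\lambda)=\prod_{\substack{n\geq1\\ 0\leq\nu_p(n)<r}}p^{(r-\nu_p(n))m_n(\lambda)+d_p(m_n(\lambda))}.$$ Also $X_{p^r,d}=(\langle m_\lambda,h_\mu\rangle_{p^r})_{\lambda,\mu\in\mathrm{Par}(d)}$, where $\langle p_\lambda,p_\mu\rangle_{\ell}=\delta_{\lambda\mu}\ell^{l(\lambda)}z_\lambda$ on symmetric functions ($m,h,p$ the monomial, complete homogeneous and power-sum bases, $z_\lambda=\prod_r r^{m_r(\lambda)}m_r(\lambda)!$). *)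

From mathcomp Require Import all_boot.
Set Implicit Arguments. Unset Strict Implicit. Unset Printing Implicit Defensive.

Definition is_partition (d : nat) (s : seq nat) : bool :=
  [&& sorted geq s, all (fun x => 0 < x) s & sumn s == d].

(* Candidates: every partition of d has at most d parts, each <= d; pad with
   zeros to length d and drop the zeros again. *)
Definition par_candidates (d : nat) : seq (seq nat) :=
  [seq filter (fun x => 0 < x) (map (@nat_of_ord d.+1) (tval t))
  | t <- enum {: d.-tuple 'I_d.+1}].

Definition Par (d : nat) : seq (seq nat) :=
  undup (filter (is_partition d) (par_candidates d)).

Definition mult (n : nat) (la : seq nat) : nat := count_mem n la.

Definition ltot (d : nat) : nat := \sum_(la <- Par d) size la.

(* d_p(a) = sum_{j>=1} floor(a / p^j); terms with j > a vanish (p >= 2). *)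
Definition dp (p a : nat) : nat := \sum_(1 <= j < a.+1) a %/ p ^ j.

(* vartheta_{p^r}(lambda): product over n >= 1 with nu_p(n) < r; factors with
   n not a part (in particular n > sumn la) equal p^0 = 1. nu_p(n) = logn p n. *)
Definition vartheta (p r : nat) (la : seq nat) : nat :=
  \prod_(1 <= n < (sumn la).+1 | logn p n < r)
     p ^ ((r - logn p n) * mult n la + dp p (mult n la)).

(* Both sides are powers of p, so we compare exponents.  Write
   S(n) = \sum_(la in Par d) m_n(la) for the total number of parts equal to n.
   1. Removing c copies of n is a bijection from the partitions of d with
      m_n >= c onto Par(d - c n).  Hence the number of such partitions depends
      only on c * n, and writing floor(m / q) = #{k >= 1 | k q <= m} gives
        \sum_la floor(m_n(la) / q) = S(q n),
      so that \sum_la d_p(m_n(la)) = \sum_(j >= 1) S(p^j n).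
   2. An integer m >= 1 is of the form p^j n with j >= 1 and nu_p(n) < r for
      exactly min(nu_p(m), r) pairs (n, j).  Therefore the exponent of the
      left-hand side is
        \sum_(nu_p(n) < r) (r - nu_p(n)) S(n) + \sum_m min(nu_p(m), r) S(m)
      = r \sum_m S(m) = r l(d). *)

From mathcomp Require Import all_boot zify.
Set Implicit Arguments. Unset Strict Implicit. Unset Printing Implicit Defensive.

Lemma geq_trans : transitive geq.
Proof. exact: rev_trans leq_trans. Qed.

Lemma geq_total : total geq.
Proof. by move=> x y; apply: leq_total. Qed.

Lemma geq_anti : antisymmetric geq.
Proof. by move=> x y H; apply: anti_leq; rewrite andbC. Qed.

Lemma mem_leq_sumn x s : x \in s -> x <= sumn s.
Proof.
elim: s => //= y s IH; rewrite inE => /orP[/eqP->|/IH H]; first exact: leq_addr.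
exact: leq_trans H (leq_addl _ _).
Qed.

Lemma size_leq_sumn s : all (fun x => 0 < x) s -> size s <= sumn s.
Proof. by elim: s => //= x s IH /andP[x_gt0 /IH]; rewrite -add1n; apply: leq_add. Qed.

(* [Par d] lists every partition of d: a partition has at most d parts, each
   at most d, so it is found among the zero-padded d-tuples over 'I_d.+1. *)
Lemma mem_Par d la : (la \in Par d) = is_partition d la.
Proof.
rewrite /Par mem_undup mem_filter; case Hp: (is_partition d la) => //=.
move: Hp => /and3P[_ Hpos /eqP Hsum].
have Hsz : size la <= d by rewrite -Hsum size_leq_sumn.
have Hle x : x \in la -> x < d.+1 by rewrite ltnS -Hsum; apply: mem_leq_sumn.
set s := la ++ nseq (d - size la) 0.
have Hs : size (map (fun x => @inord d x) s) == d.
  by rewrite size_map size_cat size_nseq subnKC.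
apply/mapP; exists (Tuple Hs); first by rewrite mem_enum.
rewrite /= -map_comp.
have -> : map (@nat_of_ord d.+1 \o (fun x => @inord d x)) s = s.
  rewrite -[RHS]map_id; apply/eq_in_map => x; rewrite /s mem_cat.
  by case/orP=> [/Hle x_lt | /nseqP[-> _]]; rewrite /= inordK.
rewrite /s filter_cat (all_filterP Hpos).
by elim: (d - size la) => [|k IH]; rewrite ?cats0.
Qed.

Lemma Par_part_bounds d la x : la \in Par d -> x \in la -> 0 < x <= d.
Proof.
rewrite mem_Par => /and3P[_ Hpos /eqP Hs] Hx.
by rewrite (allP Hpos _ Hx) -Hs mem_leq_sumn.
Qed.

Lemma mult_mul_leq_sumn n la : mult n la * n <= sumn la.
Proof.
elim: la => //= x s IH; rewrite /mult /= mulnDl.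
by apply: leq_add => //; case: eqP => [->|_]; rewrite ?mul1n.
Qed.

(* Multiplicities of positive parts are bounded by d, which bounds all the
   auxiliary ranges of summation below. *)
Lemma mult_leq_Par d n la : 0 < n -> la \in Par d -> mult n la <= d.
Proof.
move=> n_gt0; rewrite mem_Par => /and3P[_ _ /eqP <-].
exact: leq_trans (leq_pmulr _ n_gt0) (mult_mul_leq_sumn n la).
Qed.

Lemma perm_rem_copies c n (la : seq nat) : c <= mult n la ->
  perm_eq la (nseq c n ++ iter c (rem n) la) /\ subseq (iter c (rem n) la) la.
Proof.
elim: c la => [|c IH] la Hc /=; first by split; [exact: perm_refl | exact: subseq_refl].
have Hn : n \in la by rewrite -has_pred1 has_count (leq_trans _ Hc).
have Hp := perm_to_rem Hn.
have Hc' : c <= mult n (rem n la) by move: Hc; rewrite /mult (permP Hp) /= eqxx.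
have [P1 S1] := IH _ Hc'.
rewrite -[rem n (iter c (rem n) la)]/(iter c.+1 (rem n) la) iterSr; split.
  by apply: (perm_trans Hp); rewrite /= perm_cons.
exact: subseq_trans S1 (rem_subseq _ _).
Qed.

Definition add_copies c n (mu : seq nat) : seq nat := sort geq (nseq c n ++ mu).

Lemma perm_add_copies c n mu : perm_eq (add_copies c n mu) (nseq c n ++ mu).
Proof. exact: permEl (perm_sort _ _). Qed.

(* Removal of c copies of n is a bijection from the partitions of d with
   m_n >= c onto Par (d - c n). *)
Lemma count_mult_geq_Par c n d : 0 < n -> c * n <= d ->
  count (fun la => c <= mult n la) (Par d) = size (Par (d - c * n)).
Proof.
move=> n_gt0 cn_le_d; rewrite -size_filter.
have U1 : uniq (filter (fun la => c <= mult n la) (Par d)).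
  by rewrite filter_uniq // undup_uniq.
have U2 : uniq (map (add_copies c n) (Par (d - c * n))).
  rewrite map_inj_in_uniq ?undup_uniq // => m1 m2.
  rewrite !mem_Par => /and3P[S1 _ _] /and3P[S2 _ _].
  move/(perm_sortP geq_total geq_trans geq_anti); rewrite perm_cat2l.
  exact/(sorted_eq geq_trans geq_anti S1 S2).
rewrite -[size (Par _)](size_map (add_copies c n)); apply/perm_size/uniq_perm => // la.
rewrite mem_filter mem_Par; apply/andP/mapP.
- move=> [Hc /and3P[Hs Hpos /eqP Hsum]].
  have [P1 S1] := perm_rem_copies Hc.
  exists (iter c (rem n) la).
    rewrite mem_Par; apply/and3P; split.
    + exact: (subseq_sorted geq_trans S1 Hs).
    + by apply/allP => x /(mem_subseq S1); apply: (allP Hpos).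
    + by rewrite -Hsum (perm_sumn P1) sumn_cat sumn_nseq mulnC addKn.
  rewrite -[LHS](sorted_sort geq_trans Hs).
  exact/(perm_sortP geq_total geq_trans geq_anti).
- move=> [mu]; rewrite mem_Par => /and3P[Hs Hpos /eqP Hsum] ->.
  have Hp := perm_add_copies c n mu.
  split; first by rewrite /mult (permP Hp) count_cat count_nseq /= eqxx mul1n leq_addr.
  apply/and3P; split; first exact: (sort_sorted geq_total).
    by rewrite (perm_all _ Hp) all_cat Hpos andbT; apply/allP => x /nseqP[-> _].
  by rewrite (perm_sumn Hp) sumn_cat sumn_nseq Hsum mulnC subnKC.
Qed.

Definition npar_below (d m : nat) : nat := if m <= d then size (Par (d - m)) else 0.

Lemma count_mult_geq c n d : 0 < n ->
  count (fun la => c <= mult n la) (Par d) = npar_below d (c * n).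
Proof.
move=> n_gt0; rewrite /npar_below; case: leqP => [|d_lt]; first exact: count_mult_geq_Par.
apply/eqP; rewrite eqn0Ngt -has_count; apply/hasPn => la.
rewrite mem_Par => /and3P[_ _ /eqP Hs]; rewrite -ltnNge -(ltn_pmul2r n_gt0).
by apply: leq_ltn_trans (mult_mul_leq_sumn n la) _; rewrite Hs.
Qed.

Lemma sum_leq_indicator a K : \sum_(1 <= k < K.+1) (k <= a) = minn a K.
Proof.
elim: K => [|K IH]; first by rewrite big_geq // minn0.
by rewrite big_nat_recr //= IH; case: (leqP a K) => H; lia.
Qed.

Lemma sum_eq_indicator (x : nat) (P : pred nat) a b :
  \sum_(a <= n < b | P n) (x == n : nat) = (a <= x < b) && P x.
Proof.
rewrite big_mkcond (eq_bigr (fun n => if P n && (n == x) then 1 else 0)).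
  by rewrite -big_mkcond big_nat1_cond_eq; case: (_ && _).
by move=> n _; rewrite eq_sym; case: (P n); case: (n == x).
Qed.

Lemma div_as_count m q K : 0 < q -> m <= K ->
  m %/ q = \sum_(1 <= k < K.+1) (k * q <= m).
Proof.
move=> q_gt0 m_le_K.
rewrite (eq_bigr (fun k => (k <= m %/ q) : nat)); last by move=> k _; rewrite leq_divRL.
by rewrite sum_leq_indicator; apply/esym/minn_idPl; apply: leq_trans (leq_div _ _) m_le_K.
Qed.

Lemma sum_window v r K : v <= K ->
  \sum_(1 <= j < K.+1) ((j <= v) && (v - j < r)) = minn v r.
Proof.
move=> v_le_K.
have E : \sum_(1 <= j < K.+1) (j <= v) =
   \sum_(1 <= j < K.+1) (j <= v - r) + \sum_(1 <= j < K.+1) ((j <= v) && (v - j < r)).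
  rewrite -big_split /=; apply: eq_big_nat => j /andP[j_gt0 _].
  case: (leqP j (v - r)); case: (leqP j v); case: (ltnP (v - j) r) => //=; lia.
by move: E; rewrite !sum_leq_indicator; lia.
Qed.

Lemma dp_extend p a d : prime p -> a <= d ->
  dp p a = \sum_(1 <= j < d.+1) a %/ p ^ j.
Proof.
move=> p_pr a_le_d; rewrite /dp [RHS](@big_cat_nat _ _ _ a.+1) //=.
rewrite [X in _ = _ + X]big_nat_cond [X in _ = _ + X]big1 ?addn0 // => j.
rewrite andbT => /andP[a_lt_j _]; apply: divn_small.
exact: leq_trans a_lt_j (ltnW (ltn_expl _ (prime_gt1 p_pr))).
Qed.

Definition part_count (d n : nat) : nat := \sum_(la <- Par d) mult n la.

(* Expanding each floor as a count and exchanging the two sums. *)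
Lemma sum_div_mult d n q : 0 < n -> 0 < q ->
  \sum_(la <- Par d) mult n la %/ q = \sum_(1 <= k < d.+1) npar_below d (k * q * n).
Proof.
move=> n_gt0 q_gt0.
rewrite (eq_big_seq (fun la => \sum_(1 <= k < d.+1) (k * q <= mult n la) : nat)).
  rewrite exchange_big; apply: eq_bigr => k _.
  rewrite -count_mult_geq // -sum1_count [RHS]big_mkcond /=.
  by apply: eq_bigr => la _; case: (_ <= _).
by move=> la Hla; apply: div_as_count => //; apply: mult_leq_Par.
Qed.

(* Since both sides depend only on q * n:  \sum_la floor(m_n(la) / q) = S(q n). *)
Lemma sum_div_mult_part_count d n q : 0 < n -> 0 < q ->
  \sum_(la <- Par d) mult n la %/ q = part_count d (q * n).
Proof.
move=> n_gt0 q_gt0; rewrite sum_div_mult // /part_count.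
rewrite (eq_bigr (fun la => mult (q * n) la %/ 1)); last by move=> la _; rewrite divn1.
rewrite sum_div_mult ?muln_gt0 ?n_gt0 ?q_gt0 //.
by apply: eq_bigr => k _; rewrite muln1 mulnA.
Qed.

Lemma sum_dp_mult p d n : prime p -> 0 < n ->
  \sum_(la <- Par d) dp p (mult n la) = \sum_(1 <= j < d.+1) part_count d (p ^ j * n).
Proof.
move=> p_pr n_gt0.
rewrite (eq_big_seq (fun la => \sum_(1 <= j < d.+1) mult n la %/ p ^ j)).
  rewrite exchange_big; apply: eq_bigr => j _.
  by rewrite sum_div_mult_part_count // expn_gt0 prime_gt0.
by move=> la Hla; apply: dp_extend => //; apply: mult_leq_Par.
Qed.

Lemma part_count_large d m : d < m -> part_count d m = 0.
Proof.
move=> d_lt_m; apply: big1_seq => la /andP[_ Hla]; apply/count_memPn.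
by apply/negP => /(Par_part_bounds Hla) /andP[_]; rewrite leqNgt d_lt_m.
Qed.

Lemma size_as_mults (s : seq nat) K : (forall x, x \in s -> 0 < x <= K) ->
  size s = \sum_(1 <= n < K.+1) mult n s.
Proof.
elim: s => [|x s IH] Hs; first by rewrite big1.
rewrite /= /mult big_split /= -IH; last by move=> y Hy; apply: Hs; rewrite inE Hy orbT.
by rewrite sum_eq_indicator andbT ltnS Hs ?inE ?eqxx.
Qed.

Lemma ltot_part_counts d : ltot d = \sum_(1 <= n < d.+1) part_count d n.
Proof.
rewrite /ltot /part_count -exchange_big /=; apply: eq_big_seq => la Hla.
by apply: size_as_mults => x; apply: Par_part_bounds.
Qed.

(* nu_p(m) < m, so the exponents j needed below are at most d. *)
Lemma logn_lt p m : prime p -> 0 < m -> logn p m < m.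
Proof.
move=> p_pr m_gt0; apply: leq_trans (ltn_expl _ (prime_gt1 p_pr)) _.
exact: dvdn_leq m_gt0 (pfactor_dvdnn _ _).
Qed.

(* m = p^j n with j >= 1 and nu_p(n) < r for exactly min(nu_p(m), r) pairs:
   j ranges over nu_p(m) - r < j <= nu_p(m) and n = m / p^j. *)
Lemma count_p_power_factorizations p r d m : prime p -> 0 < m -> m <= d ->
  \sum_(1 <= n < d.+1 | logn p n < r) \sum_(1 <= j < d.+1) (m == p ^ j * n : nat)
  = minn (logn p m) r.
Proof.
move=> p_pr m_gt0 m_le_d; rewrite exchange_big /=.
rewrite (eq_big_nat _ _ (F2 := fun j => ((j <= logn p m) && (logn p m - j < r)) : nat)).
  exact/sum_window/ltnW/(leq_trans (logn_lt p_pr m_gt0)).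
move=> j /andP[j_gt0 _].
have pj_gt0 : 0 < p ^ j by rewrite expn_gt0 prime_gt0.
have [pj_dvd | pj_ndvd] := boolP (p ^ j %| m); last first.
  rewrite -pfactor_dvdn // (negbTE pj_ndvd) /=; apply: big1 => n _.
  by case: eqP => // E; rewrite E dvdn_mulr in pj_ndvd.
have Em : m = p ^ j * (m %/ p ^ j) by rewrite mulnC divnK.
rewrite (eq_bigr (fun n => (m %/ p ^ j == n : nat))); last by move=> n _; rewrite {1}Em eqn_pmul2l.
rewrite sum_eq_indicator -pfactor_dvdn // pj_dvd logn_div // pfactorK //.
by rewrite divn_gt0 // (dvdn_leq m_gt0 pj_dvd) ltnS (leq_trans (leq_div _ _) m_le_d).
Qed.

Lemma sum_p_power_multiples p r d (S : nat -> nat) : prime p ->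
  (forall m, d < m -> S m = 0) ->
  \sum_(1 <= n < d.+1 | logn p n < r) \sum_(1 <= j < d.+1) S (p ^ j * n)
  = \sum_(1 <= m < d.+1) minn (logn p m) r * S m.
Proof.
move=> p_pr S_large.
have S_as_sum n j : 0 < n ->
    S (p ^ j * n) = \sum_(1 <= m < d.+1) (m == p ^ j * n) * S m.
  move=> n_gt0; rewrite (eq_bigr (fun m => if m == p ^ j * n then S m else 0)).
    rewrite -big_mkcond big_nat1_eq; case: ifP => // /negbT.
    by rewrite muln_gt0 expn_gt0 prime_gt0 // n_gt0 /= ltnNge negbK => /S_large.
  by move=> m _; case: eqP; rewrite ?mul1n ?mul0n.
rewrite big_seq_cond.
rewrite [LHS](eq_bigr (fun n => \sum_(1 <= m < d.+1) \sum_(1 <= j < d.+1)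
                             (m == p ^ j * n) * S m)); last first.
  move=> n; rewrite mem_index_iota => /andP[/andP[n_gt0 _] _].
  by rewrite exchange_big; apply: eq_bigr => j _; apply: S_as_sum.
rewrite -big_seq_cond exchange_big /=; apply: eq_big_nat => m /andP[m_gt0 m_lt].
rewrite -(count_p_power_factorizations r p_pr m_gt0 m_lt).
by rewrite big_distrl; apply: eq_bigr => n _; rewrite big_distrl.
Qed.

Definition vartheta_exponent (p r d : nat) (la : seq nat) : nat :=
  \sum_(1 <= n < d.+1 | logn p n < r) ((r - logn p n) * mult n la + dp p (mult n la)).

Lemma vartheta_Par p r d la : la \in Par d ->
  vartheta p r la = p ^ vartheta_exponent p r d la.
Proof.
rewrite mem_Par => /and3P[_ _ /eqP Hs].
by rewrite /vartheta Hs /vartheta_exponent (big_morph (expn p) (expnD p) (expn0 p)).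
Qed.

(* Summing the exponents: the n-th term contributes (r - nu_p(n)) S(n) plus,
   through d_p, the values S(p^j n); regrouped by m these give r S(m). *)
Lemma sum_vartheta_exponent p r d : prime p ->
  \sum_(la <- Par d) vartheta_exponent p r d la = r * ltot d.
Proof.
move=> p_pr; rewrite /vartheta_exponent exchange_big /= big_seq_cond.
rewrite (eq_bigr (fun n => (r - logn p n) * part_count d n
                           + \sum_(1 <= j < d.+1) part_count d (p ^ j * n))); last first.
  move=> n /andP[]; rewrite mem_index_iota => /andP[n_gt0 _] _.
  by rewrite big_split /= -big_distrr sum_dp_mult.
rewrite -big_seq_cond big_split /= sum_p_power_multiples //; last first.
  by move=> m; apply: part_count_large.
rewrite ltot_part_counts big_distrr big_mkcond -big_split /=.
apply: eq_bigr => n _; case: ltnP => [nu_lt_r | r_le_nu].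
  by rewrite -mulnDl; congr (_ * _); lia.
by rewrite add0n; congr (_ * _); lia.
Qed.

Theorem proposition4p1 (p r d : nat) :
  prime p -> 0 < r ->
  \prod_(la <- Par d) vartheta p r la = p ^ (r * ltot d).
Proof.
move=> p_pr _; rewrite (eq_big_seq _ (@vartheta_Par p r d)).
by rewrite -(big_morph (expn p) (expnD p) (expn0 p)) sum_vartheta_exponent.
Qed.
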